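(* Let $\mathsf R\subseteq\{\mathsf e,\mathsf c,\mathsf w\}$. Every member of $\mathsf{InRLUG}_{\mathsf R}$ embeds into the $\{\wedge,\vee,\cdot,\backslash,/,1,0\}$-reduct of some member of $\mathsf{NACCLL}^-_{\mathsf R}$, and every member of $\mathsf{CyInRLUG}_{\mathsf R}$ embeds into the $\{\wedge,\vee,\cdot,\backslash,/,1,0\}$-reduct of some member of $\mathsf{NACCLL}_{\mathsf R}$.
   Context: An $r\ell uz$-groupoid is an algebra $(A,\wedge,\vee,\cdot,\backslash,/,1,0)$ with $(A,\wedge,\vee)$ a lattice (order $\le$), $(A,\cdot,1)$ a unital groupoid (binary operation, not necessarily associative, with two-sided unit $1$), $0\in A$ arbitrary, and $x\cdot y\le z\iff y\le x\backslash z\iff x\le z/y$. Write ${\sim}x:=x\backslash 0$, $-x:=0/x$. It is involutive if ${\sim}(-x)=x=-({\sim}x)$ and $({\sim}x)/y=x\backslash(-y)$; cyclic if moreover ${\sim}x=-x$. Equations: $(\mathsf e)$ $x\cdot y\le y\cdot x$; $(\mathsf c)$ $x\le x\cdot x$; $(\mathsf w)$: both $x\le 1$ and $0\le x$. $\mathsf{InRLUG}_{\mathsf R}$ ($\mathsf{CyInRLUG}_{\mathsf R}$): involutive (cyclic involutive) $r\ell uz$-groupoids satisfying $\mathsf R$. An NACCLL$^-$-algebra is an involutive $r\ell uz$-groupoid with a unary $!$ satisfying $1\le !1$, $!x\cdot!y\le !(x\cdot y)$, $!x\le x$, $!x\le !!x$, $x\le y\Rightarrow !x\le !y$, and $!x\le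 1$, $!x\le !x\cdot!x$, $!x\cdot y=y\cdot !x$, $!x\cdot(y\cdot z)=(!x\cdot y)\cdot z$, $x\cdot(y\cdot !z)=(x\cdot y)\cdot !z$; an NACCLL-algebra is one whose reduct is cyclic. $\mathsf{NACCLL}^-_{\mathsf R}$, $\mathsf{NACCLL}_{\mathsf R}$: those satisfying $\mathsf R$. An embedding is an injective homomorphism; the $\mathcal N$-reduct forgets operations outside $\mathcal N$. *)

Record rluz_sig := RluzSig {
  car : Type;
  meet : car -> car -> car;
  join : car -> car -> car;
  mul  : car -> car -> car;
  ldiv : car -> car -> car;
  rdiv : car -> car -> car;
  one  : car;
  zero : car
}.

Arguments meet {r}. Arguments join {r}. Arguments mul {r}.
Arguments ldiv {r}. Arguments rdiv {r}. Arguments one {r}. Arguments zero {r}.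

Definition le {A : rluz_sig} (x y : car A) : Prop := meet x y = x.

Definition is_lattice (A : rluz_sig) : Prop :=
  (forall x y z : car A, meet x (meet y z) = meet (meet x y) z) /\
  (forall x y z : car A, join x (join y z) = join (join x y) z) /\
  (forall x y : car A, meet x y = meet y x) /\
  (forall x y : car A, join x y = join y x) /\
  (forall x y : car A, meet x (join x y) = x) /\
  (forall x y : car A, join x (meet x y) = x).

(* rluz-groupoid: lattice, unital groupoid (not nec. associative), residuation *)
Definition is_rluz (A : rluz_sig) : Prop :=
  is_lattice A /\
  (forall x : car A, mul one x = x /\ mul x one = x) /\
  (forall x y z : car A,
     (le (mul x y) z <-> le y (ldiv x z)) /\
     (le (mul x y) z <-> le x (rdiv z y))).

Definition tneg {A : rluz_sig} (x : car A) : car A := ldiv x zero.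
Definition mneg {A : rluz_sig} (x : car A) : car A := rdiv zero x.

Definition is_involutive (A : rluz_sig) : Prop :=
  is_rluz A /\
  (forall x : car A, tneg (mneg x) = x /\ mneg (tneg x) = x) /\
  (forall x y : car A, rdiv (tneg x) y = ldiv x (mneg y)).

Definition is_cyclic_involutive (A : rluz_sig) : Prop :=
  is_involutive A /\ (forall x : car A, tneg x = mneg x).

Record eqset := EqSet { has_e : bool; has_c : bool; has_w : bool }.

Definition sat (R : eqset) (A : rluz_sig) : Prop :=
  (has_e R = true -> forall x y : car A, le (mul x y) (mul y x)) /\
  (has_c R = true -> forall x : car A, le x (mul x x)) /\
  (has_w R = true -> forall x : car A, le x one /\ le zero x).

Record nac_sig := NacSig { nbase : rluz_sig; bang : car nbase -> car nbase }.

Definition is_NACCLLm (B : nac_sig) : Prop :=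
  let A := nbase B in let b := bang B in
  is_involutive A /\
  le (one : car A) (b one) /\
  (forall x y : car A, le (mul (b x) (b y)) (b (mul x y))) /\
  (forall x : car A, le (b x) x) /\
  (forall x : car A, le (b x) (b (b x))) /\
  (forall x y : car A, le x y -> le (b x) (b y)) /\
  (forall x : car A, le (b x) one) /\
  (forall x : car A, le (b x) (mul (b x) (b x))) /\
  (forall x y : car A, mul (b x) y = mul y (b x)) /\
  (forall x y z : car A, mul (b x) (mul y z) = mul (mul (b x) y) z) /\
  (forall x y z : car A, mul x (mul y (b z)) = mul (mul x y) (b z)).

Definition is_NACCLL (B : nac_sig) : Prop :=
  is_NACCLLm B /\ is_cyclic_involutive (nbase B).

Definition is_embedding (A C : rluz_sig) (f : car A -> car C) : Prop :=
  (forall x y, f x = f y -> x = y) /\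
  (forall x y, f (meet x y) = meet (f x) (f y)) /\
  (forall x y, f (join x y) = join (f x) (f y)) /\
  (forall x y, f (mul x y) = mul (f x) (f y)) /\
  (forall x y, f (ldiv x y) = ldiv (f x) (f y)) /\
  (forall x y, f (rdiv x y) = rdiv (f x) (f y)) /\
  f one = one /\ f zero = zero.

From Stdlib Require Import ClassicalEpsilon Setoid.

(* If an rluz-groupoid has a least element [bot] that is absorbing for
   multiplication, then [!x := 1] when [1 <= x] and [!x := bot] otherwise makes
   it a NACCLL^- algebra: every [!x] is [1] or [bot], which commute and
   associate with everything, and [1 <= x], [1 <= y] give [1 <= x y].
   Under (w), [0] is such an element.  Without (w), adjoin a new bottom [Bot]
   (absorbing) and a new top [Top] (absorbing for the original elements); this
   preserves involutivity, cyclicity, (e) and (c), and [In] embeds the original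
   algebra. *)

Section Order.
Variable C : rluz_sig.
Hypothesis HC : is_rluz C.

Lemma meet_idem (x : car C) : meet x x = x.
Proof.
  destruct HC as [[_ [_ [_ [_ [meet_join join_meet]]]]] _].
  rewrite <- (join_meet x x) at 2. apply meet_join.
Qed.

Lemma le_refl (x : car C) : le x x.
Proof. apply meet_idem. Qed.

Lemma le_trans (x y z : car C) : le x y -> le y z -> le x z.
Proof.
  destruct HC as [[meetA _] _]. unfold le; intros Hxy Hyz.
  rewrite <- Hxy, <- meetA, Hyz. reflexivity.
Qed.

Lemma le_antisym (x y : car C) : le x y -> le y x -> x = y.
Proof.
  destruct HC as [[_ [_ [meetC _]]] _]. unfold le; intros Hxy Hyx.
  rewrite <- Hxy, meetC. exact Hyx.
Qed.

Lemma mul_le_mono_r (a a' b : car C) : le a a' -> le (mul a b) (mul a' b).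
Proof.
  destruct HC as [_ [_ res]]. intro Ha.
  apply (proj2 (res a b _)), (le_trans _ a'); [exact Ha|].
  apply (proj2 (res a' b _)), le_refl.
Qed.

Lemma mul_le_mono_l (a b b' : car C) : le b b' -> le (mul a b) (mul a b').
Proof.
  destruct HC as [_ [_ res]]. intro Hb.
  apply (proj1 (res a b _)), (le_trans _ b'); [exact Hb|].
  apply (proj1 (res a b' _)), le_refl.
Qed.

Lemma one_le_mul (a b : car C) : le one a -> le one b -> le one (mul a b).
Proof.
  destruct HC as [_ [unit _]]. intros Ha Hb.
  apply (le_trans _ (mul a one)).
  - rewrite (proj2 (unit a)). exact Ha.
  - apply mul_le_mono_l. exact Hb.
Qed.

(* [x 0 <= 0] iff [x <= 0 / 0], and [0 <= 0 / 0] since [0] is least. *)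
Lemma least_zero_absorbing :
  (forall x : car C, le zero x) ->
  forall x : car C, mul zero x = zero /\ mul x zero = zero.
Proof.
  destruct HC as [_ [_ res]]. intros zero_least x.
  split; apply le_antisym; try apply zero_least.
  - apply (proj2 (proj2 (res _ _ _))), zero_least.
  - apply (proj2 (proj1 (res _ _ _))), zero_least.
Qed.

End Order.

Section TwoValuedBang.
Variable C : rluz_sig.
Hypothesis HC : is_rluz C.
Variable bot : car C.
Hypothesis bot_least : forall x, le bot x.
Hypothesis bot_absorbing : forall x, mul bot x = bot /\ mul x bot = bot.

Definition two_valued_bang (x : car C) : car C :=
  if excluded_middle_informative (le one x) then one else bot.

Lemma two_valued_bang_cases x :
  (two_valued_bang x = one /\ le one x) \/ (two_valued_bang x = bot /\ ~ le one x).
Proof. unfold two_valued_bang. destruct excluded_middle_informative; auto. Qed.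

Lemma two_valued_bang_one : two_valued_bang one = one.
Proof.
  destruct (two_valued_bang_cases one) as [[-> _] | [_ H]]; [reflexivity|].
  exfalso. apply H, le_refl, HC.
Qed.

Lemma unit_or_bot_central (u : car C) : u = one \/ u = bot ->
  (forall y, mul u y = mul y u) /\
  (forall y z, mul u (mul y z) = mul (mul u y) z) /\
  (forall x y, mul x (mul y u) = mul (mul x y) u) /\
  le u one /\ le u (mul u u).
Proof.
  destruct HC as [_ [unit _]].
  intros [-> | ->]; repeat split; intros;
    rewrite ?(proj1 (unit _)), ?(proj2 (unit _)),
            ?(proj1 (bot_absorbing _)), ?(proj2 (bot_absorbing _));
    auto using le_refl.
Qed.

Lemma two_valued_bang_central x :
  two_valued_bang x = one \/ two_valued_bang x = bot.
Proof. destruct (two_valued_bang_cases x) as [[-> _] | [-> _]]; auto. Qed.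

Lemma two_valued_bang_le x : le (two_valued_bang x) x.
Proof. destruct (two_valued_bang_cases x) as [[-> H] | [-> _]]; auto. Qed.

Lemma two_valued_bang_mono x y : le x y -> le (two_valued_bang x) (two_valued_bang y).
Proof.
  intro Hxy. destruct (two_valued_bang_cases x) as [[-> Hx] | [-> _]]; [|apply bot_least].
  destruct (two_valued_bang_cases y) as [[-> _] | [_ Hy]]; [apply le_refl, HC|].
  exfalso. apply Hy, (le_trans C HC _ x); assumption.
Qed.

Lemma two_valued_bang_mul x y :
  le (mul (two_valued_bang x) (two_valued_bang y)) (two_valued_bang (mul x y)).
Proof.
  destruct HC as [_ [unit _]].
  destruct (two_valued_bang_cases x) as [[-> Hx] | [-> _]];
    [|rewrite (proj1 (bot_absorbing _)); apply bot_least].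
  destruct (two_valued_bang_cases y) as [[-> Hy] | [-> _]];
    [|rewrite (proj2 (bot_absorbing _)); apply bot_least].
  destruct (two_valued_bang_cases (mul x y)) as [[-> _] | [_ Hxy]].
  - rewrite (proj1 (unit one)). apply le_refl, HC.
  - exfalso. apply Hxy, one_le_mul; assumption.
Qed.

Lemma is_NACCLLm_two_valued_bang :
  is_involutive C -> is_NACCLLm (NacSig C two_valued_bang).
Proof.
  intro HI. unfold is_NACCLLm; cbn.
  split; [exact HI|]. split.
  { rewrite two_valued_bang_one. apply le_refl, HC. }
  split; [exact two_valued_bang_mul|]. split; [exact two_valued_bang_le|].
  split.
  { intro x. destruct (two_valued_bang_central x) as [-> | ->]; [|apply bot_least].
    rewrite two_valued_bang_one. apply le_refl, HC. }
  split; [exact two_valued_bang_mono|].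
  repeat split; intros;
    apply (unit_or_bot_central _ (two_valued_bang_central _)).
Qed.

End TwoValuedBang.

Inductive ext (T : Type) := Bot | Top | In (a : T).
Arguments Bot {T}. Arguments Top {T}. Arguments In {T}.

Section Extension.
Variable A : rluz_sig.

Definition ext_meet (x y : ext (car A)) : ext (car A) :=
  match x, y with
  | Bot, _ | _, Bot => Bot
  | Top, y => y
  | x, Top => x
  | In a, In b => In (meet a b)
  end.

Definition ext_join (x y : ext (car A)) : ext (car A) :=
  match x, y with
  | Top, _ | _, Top => Top
  | Bot, y => y
  | x, Bot => x
  | In a, In b => In (join a b)
  end.

Definition ext_mul (x y : ext (car A)) : ext (car A) :=
  match x, y with
  | Bot, _ | _, Bot => Bot
  | Top, _ | _, Top => Top
  | In a, In b => In (mul a b)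
  end.

Definition ext_ldiv (x z : ext (car A)) : ext (car A) :=
  match x, z with
  | Bot, _ | _, Top => Top
  | Top, _ | In _, Bot => Bot
  | In a, In c => In (ldiv a c)
  end.

Definition ext_rdiv (z y : ext (car A)) : ext (car A) :=
  match z, y with
  | _, Bot | Top, _ => Top
  | _, Top | Bot, In _ => Bot
  | In c, In b => In (rdiv c b)
  end.

Definition Ext : rluz_sig :=
  RluzSig (ext (car A)) ext_meet ext_join ext_mul ext_ldiv ext_rdiv (In one) (In zero).

Definition ext_le (x y : ext (car A)) : Prop :=
  match x, y with
  | Bot, _ | _, Top => True
  | In a, In b => le a b
  | _, _ => False
  end.

Lemma le_Ext (x y : car Ext) : le x y <-> ext_le x y.
Proof.
  unfold le; destruct x, y; cbn; split; intro H;
    solve [ auto | discriminate | contradiction | congruence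
          | injection H; auto | rewrite H; reflexivity ].
Qed.

Lemma Bot_least (x : car Ext) : le (Bot : car Ext) x.
Proof. apply le_Ext. exact I. Qed.

Lemma Bot_absorbing (x : car Ext) :
  mul (Bot : car Ext) x = Bot /\ mul x (Bot : car Ext) = Bot.
Proof. destruct x; split; reflexivity. Qed.

Lemma In_embedding : is_embedding A Ext In.
Proof. repeat split. intros x y H. injection H. auto. Qed.

Lemma is_rluz_Ext : is_rluz A -> is_rluz Ext.
Proof.
  intro HA. pose proof (meet_idem A HA) as meetI.
  assert (joinI : forall x : car A, join x x = x).
  { destruct HA as [[_ [_ [_ [_ [meet_join join_meet]]]]] _].
    intro x. rewrite <- (meet_join x x) at 2. apply join_meet. }
  destruct HA as [[meetA [joinA [meetC [joinC [meet_join join_meet]]]]] [unit res]].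
  split; [|split].
  - repeat split; intros;
      repeat match goal with x : car Ext |- _ => destruct x end; cbn;
      f_equal; auto.
  - intros [| |a]; split; cbn; f_equal; apply unit.
  - intros x y z. rewrite !le_Ext. destruct x, y, z; cbn; try tauto; apply res.
Qed.

Lemma is_involutive_Ext : is_involutive A -> is_involutive Ext.
Proof.
  intros [HA [neg_inv ldiv_rdiv]]. split; [exact (is_rluz_Ext HA)|split].
  - intros [| |a]; unfold tneg, mneg; cbn; auto.
    destruct (neg_inv a) as [E1 E2]. unfold tneg, mneg in E1, E2.
    rewrite E1, E2. auto.
  - intros [| |a] [| |b]; cbn; auto. f_equal. apply ldiv_rdiv.
Qed.

Lemma is_cyclic_involutive_Ext : is_cyclic_involutive A -> is_cyclic_involutive Ext.
Proof.
  intros [HI cyc]. split; [exact (is_involutive_Ext HI)|].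
  intros [| |a]; unfold tneg, mneg; cbn; auto. f_equal. apply cyc.
Qed.

(* (w) is not preserved: [Top] is not below [In one]. *)
Lemma sat_Ext (R : eqset) : has_w R = false -> sat R A -> sat R Ext.
Proof.
  intros Hw [He [Hc _]]. split; [|split].
  - intros H x y. apply le_Ext. destruct x, y; cbn; auto.
  - intros H x. apply le_Ext. destruct x; cbn; auto.
  - rewrite Hw; discriminate.
Qed.

End Extension.

Lemma NACCLLm_extension (R : eqset) (A : rluz_sig) : is_involutive A -> sat R A ->
  exists B : nac_sig, is_NACCLLm B /\ sat R (nbase B) /\
    (is_cyclic_involutive A -> is_cyclic_involutive (nbase B)) /\
    exists f : car A -> car (nbase B), is_embedding A (nbase B) f.
Proof.
  intros HI HS. assert (HR : is_rluz A) by apply HI.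
  destruct (has_w R) eqn:Hw.
  - assert (zero_least : forall x : car A, le zero x)
      by (intro x; apply (proj2 (proj2 HS) Hw x)).
    exists (NacSig A (two_valued_bang A zero)); cbn.
    split; [|split; [exact HS|split; [auto|]]].
    + apply is_NACCLLm_two_valued_bang; auto.
      apply least_zero_absorbing; assumption.
    + exists (fun x => x). repeat split; auto.
  - exists (NacSig (Ext A) (two_valued_bang (Ext A) Bot)); cbn.
    split; [|split; [apply sat_Ext; assumption|split]].
    + apply is_NACCLLm_two_valued_bang.
      * exact (is_rluz_Ext A HR).
      * apply Bot_least.
      * apply Bot_absorbing.
      * exact (is_involutive_Ext A HI).
    + apply is_cyclic_involutive_Ext.
    + exists In. apply In_embedding.
Qed.

Theorem mainTheorem16 (R : eqset) :
  (forall A : rluz_sig, is_involutive A -> sat R A ->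
     exists B : nac_sig, is_NACCLLm B /\ sat R (nbase B) /\
       exists f : car A -> car (nbase B), is_embedding A (nbase B) f) /\
  (forall A : rluz_sig, is_cyclic_involutive A -> sat R A ->
     exists B : nac_sig, is_NACCLL B /\ sat R (nbase B) /\
       exists f : car A -> car (nbase B), is_embedding A (nbase B) f).
Proof.
  split.
  - intros A HI HS.
    destruct (NACCLLm_extension R A HI HS) as [B [HB [HSB [_ Hemb]]]]. eauto.
  - intros A HC HS.
    destruct (NACCLLm_extension R A (proj1 HC) HS) as [B [HB [HSB [Hcyc Hemb]]]].
    exists B. split; [split; auto | auto].
Qed.
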